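(* Assume $b>1$, $\gamma:=kd/m-\alpha>0$ and $M>d/m$. Let $(S_t,Q_t)$ be the solution of the deterministic non-delayed system \[ S_t'=\big[\alpha-k\sigma(Q_t)\big]S_t,\qquad Q_t'=d-mQ_t+k(b-1)\sigma(Q_t)S_t, \] with initial condition $(S_0,Q_0)\in\big[0,\tfrac{mM-d}{k(b-1)M}\big]\times[d/m,M]$. Then there is a constant $c>0$ such that for all $t\ge0$, \[ |(S_t,Q_t)-E_0|\le c\,e^{-\eta t},\qquad E_0=(0,d/m),\quad \eta=\gamma\wedge\tfrac m2 . \]
   Context: Parameters $\alpha,k,d,m,M$ are positive constants. $\sigma:\mathbb R_+\to\mathbb R_+$ is a $C^\infty$ function with $\sigma(x)=x$ for $0\le x\le M$, $\sigma(x)=M+1$ for $x>M+1$, and $0\le\sigma'(x)\le C$ for some constant $C>1$. $|\cdot|$ is the Euclidean norm. *)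

From Stdlib Require Import Reals Lra.
Open Scope R_scope.

Definition smooth_on (f : R -> R) (P : R -> Prop) : Prop :=
  exists D : nat -> R -> R,
    (forall x, D 0%nat x = f x) /\
    (forall (n : nat) (x : R), P x -> derivable_pt_lim (D n) x (D (S n) x)).

Definition right_cont_at (f : R -> R) (a : R) : Prop :=
  forall eps, 0 < eps -> exists delta, 0 < delta /\
    forall t, a <= t < a + delta -> Rabs (f t - f a) < eps.

Definition norm2 (x y : R) : R := sqrt (x ^ 2 + y ^ 2).

From Stdlib Require Import Reals Lra Psatz Classical.
Open Scope R_scope.

(* The proof uses only differential inequalities, never an explicit solution.
   1. Invariance: S >= 0 and Q >= q for all t >= 0.  As long as Q > q/2,
      sigma(Q) is bounded, so S solves a linear equation with bounded
      coefficient and keeps the sign of S(0); then (Q - q)' + m (Q - q) =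
      k (b-1) sigma(Q) S >= 0 keeps Q >= q.  A continuity induction turns
      this bootstrap into a statement for all times.
   2. Decay of S: sigma(Q) >= q gives S' + gamma S <= 0, so S <= S(0) e^{-gamma t}.
   3. Decay of Q - q: (Q - q)' + m (Q - q) <= K e^{-eta t}, and a Gronwall
      bound with exponential forcing gives decay at rate eta < m. *)

Lemma exp_le_mono (x y : R) : x <= y -> exp x <= exp y.
Proof. intros [Hlt | ->]; [left; apply exp_increasing; exact Hlt | lra]. Qed.

Lemma exp_weight_cancel (a : R) : exp a * exp (- a) = 1.
Proof. rewrite <- exp_plus, Rplus_opp_r; apply exp_0. Qed.

Lemma deriv_eq (f : R -> R) (x l l' : R) :
  derivable_pt_lim f x l -> l = l' -> derivable_pt_lim f x l'.
Proof. intros H ->; exact H. Qed.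

Lemma deriv_exp_lin (c x : R) :
  derivable_pt_lim (fun s => exp (c * s)) x (c * exp (c * x)).
Proof.
  assert (Hlin : derivable_pt_lim (fun s => c * s) x c).
  { apply deriv_eq with (c * 1); [|ring].
    apply (derivable_pt_lim_scal id c x 1), derivable_pt_lim_id. }
  apply deriv_eq with (exp (c * x) * c); [|ring].
  exact (derivable_pt_lim_comp (fun s => c * s) exp x c _ Hlin
           (derivable_pt_lim_exp _)).
Qed.

Lemma deriv_sub_const (f : R -> R) (a x l : R) :
  derivable_pt_lim f x l -> derivable_pt_lim (fun s => f s - a) x l.
Proof.
  intros Hf. apply deriv_eq with (l - 0); [|ring].
  apply (derivable_pt_lim_minus f (fun _ => a)); [exact Hf | apply derivable_pt_lim_const].
Qed.

Lemma deriv_ext (f g : R -> R) (x l : R) :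
  (forall y, f y = g y) -> derivable_pt_lim f x l -> derivable_pt_lim g x l.
Proof.
  intros Hfg Hf eps Heps. destruct (Hf eps Heps) as [del Hdel].
  exists del. intros h Hh Hsmall. rewrite <- !Hfg. apply Hdel; assumption.
Qed.

Lemma right_cont_limit (f : R -> R) (a : R) :
  right_cont_at f a <-> limit1_in f (fun t => a <= t) (f a) a.
Proof.
  split; intros H eps Heps; destruct (H eps Heps) as [del [Hdel Hnear]];
    exists del; split; try lra.
  - intros x [Hax Hx]. simpl in *. unfold R_dist in *.
    apply Hnear. apply Rabs_def2 in Hx. lra.
  - intros t Ht. apply (Hnear t). simpl. unfold R_dist.
    split; [lra|]. rewrite Rabs_right; lra.
Qed.

Lemma right_cont_mul (f g : R -> R) (a : R) :
  right_cont_at f a -> right_cont_at g a -> right_cont_at (fun t => f t * g t) a.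
Proof.
  intros Hf Hg. apply right_cont_limit.
  apply limit_mul; apply right_cont_limit; assumption.
Qed.

Lemma right_cont_minus (f g : R -> R) (a : R) :
  right_cont_at f a -> right_cont_at g a -> right_cont_at (fun t => f t - g t) a.
Proof.
  intros Hf Hg. apply right_cont_limit.
  apply limit_minus; apply right_cont_limit; assumption.
Qed.

Lemma right_cont_const (c a : R) : right_cont_at (fun _ => c) a.
Proof.
  intros eps Heps. exists 1. split; [lra|]. intros t Ht.
  unfold Rminus. rewrite Rplus_opp_r, Rabs_R0. exact Heps.
Qed.

Lemma right_cont_opp (f : R -> R) (a : R) :
  right_cont_at f a -> right_cont_at (fun t => - f t) a.
Proof.
  intros Hf eps Heps. destruct (Hf eps Heps) as [del [Hdel Hnear]].
  exists del; split; [exact Hdel|]. intros t Ht.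
  replace (- f t - - f a) with (- (f t - f a)) by ring.
  rewrite Rabs_Ropp. apply Hnear; exact Ht.
Qed.

Lemma cont_near (f : R -> R) (x : R) : continuity_pt f x ->
  forall eps, 0 < eps ->
  exists del, 0 < del /\ forall y, Rabs (y - x) < del -> Rabs (f y - f x) < eps.
Proof.
  intros Hf eps Heps. destruct (Hf eps Heps) as [del [Hdel Hnear]].
  exists del; split; [lra|]. intros y Hy.
  destruct (Req_dec x y) as [<- | Hne].
  - unfold Rminus; rewrite Rplus_opp_r, Rabs_R0; exact Heps.
  - apply (Hnear y). split; [split; [exact I | exact Hne] | exact Hy].
Qed.

Lemma right_cont_of_cont (f : R -> R) (a : R) :
  continuity_pt f a -> right_cont_at f a.
Proof.
  intros Hf eps Heps. destruct (cont_near f a Hf eps Heps) as [del [Hdel Hnear]].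
  exists del; split; [exact Hdel|]. intros t Ht.
  apply Hnear. rewrite Rabs_right; lra.
Qed.

Lemma right_cont_exp_lin (c a : R) : right_cont_at (fun s => exp (c * s)) a.
Proof.
  apply right_cont_of_cont, derivable_continuous_pt.
  exists (c * exp (c * a)). apply deriv_exp_lin.
Qed.

Lemma right_cont_gt (f : R -> R) (a c : R) :
  right_cont_at f a -> c < f a ->
  exists del, 0 < del /\ forall s, a <= s < a + del -> c < f s.
Proof.
  intros Hf Hc. destruct (Hf (f a - c)) as [del [Hdel Hnear]]; [lra|].
  exists del; split; [exact Hdel|]. intros s Hs.
  specialize (Hnear s Hs). apply Rabs_def2 in Hnear. lra.
Qed.

Lemma nonneg_at_left_limit (f : R -> R) (T : R) :
  0 < T -> continuity_pt f T -> (forall s, 0 <= s < T -> 0 < f s) -> 0 <= f T.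
Proof.
  intros HT Hf Hpos. destruct (Rle_or_lt 0 (f T)) as [|Hneg]; [assumption|].
  destruct (cont_near f T Hf (- f T)) as [del [Hdel Hnear]]; [lra|].
  set (s := T - Rmin del T / 2).
  assert (Hmin : 0 < Rmin del T) by (apply Rmin_glb_lt; lra).
  pose proof (Rmin_l del T). pose proof (Rmin_r del T).
  assert (Hs : Rabs (f s - f T) < - f T) by (apply Hnear; unfold s; rewrite Rabs_left; lra).
  apply Rabs_def2 in Hs. pose proof (Hpos s ltac:(unfold s; lra)). lra.
Qed.

Lemma nonincreasing_on (g g' : R -> R) (T : R) : 0 < T -> right_cont_at g 0 ->
  (forall c, 0 < c <= T -> derivable_pt_lim g c (g' c)) ->
  (forall c, 0 < c < T -> g' c <= 0) ->
  forall s, 0 <= s <= T -> g s <= g 0.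
Proof.
  intros HT Hrc Hd Hsign s [Hs0 HsT].
  destruct (Req_dec s 0) as [-> | Hne]; [lra|].
  assert (Hinterior : forall x, 0 < x < s -> g s <= g x).
  { intros x Hx. destruct (MVT_cor2 g g' x s) as [c [Heq Hc]]; [lra| |].
    - intros c Hc. apply Hd. lra.
    - assert (g' c <= 0) by (apply Hsign; lra). nra. }
  destruct (Rle_or_lt (g s) (g 0)) as [|Hgt]; [assumption|exfalso].
  destruct (Hrc (g s - g 0)) as [del [Hdel Hnear]]; [lra|].
  set (x := Rmin del s / 2).
  assert (Hmin : 0 < Rmin del s) by (apply Rmin_glb_lt; lra).
  pose proof (Rmin_l del s). pose proof (Rmin_r del s).
  assert (Hx : Rabs (g x - g 0) < g s - g 0) by (apply Hnear; unfold x; lra).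
  apply Rabs_def2 in Hx. pose proof (Hinterior x ltac:(unfold x; lra)). lra.
Qed.

Lemma weighted_nonincreasing (f f' : R -> R) (lam T : R) :
  0 < T -> right_cont_at f 0 ->
  (forall c, 0 < c <= T -> derivable_pt_lim f c (f' c)) ->
  (forall c, 0 < c < T -> f' c + lam * f c <= 0) ->
  forall s, 0 <= s <= T -> f s * exp (lam * s) <= f 0.
Proof.
  intros HT Hrc Hd Hsign s Hs.
  replace (f 0) with (f 0 * exp (lam * 0)) by (rewrite Rmult_0_r, exp_0; ring).
  apply (nonincreasing_on (fun t => f t * exp (lam * t))
           (fun c => f' c * exp (lam * c) + f c * (lam * exp (lam * c))) T);
    [exact HT | | | | exact Hs].
  - apply right_cont_mul; [exact Hrc | apply right_cont_exp_lin].
  - intros c Hc. apply (derivable_pt_lim_mult f (fun t => exp (lam * t))); [apply Hd; exact Hc | apply deriv_exp_lin].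
  - intros c Hc. pose proof (Hsign c Hc). pose proof (exp_pos (lam * c)).
    replace (f' c * exp (lam * c) + f c * (lam * exp (lam * c)))
      with ((f' c + lam * f c) * exp (lam * c)) by ring.
    nra.
Qed.

Lemma weighted_nondecreasing (f f' : R -> R) (lam T : R) :
  0 < T -> right_cont_at f 0 ->
  (forall c, 0 < c <= T -> derivable_pt_lim f c (f' c)) ->
  (forall c, 0 < c < T -> 0 <= f' c + lam * f c) ->
  forall s, 0 <= s <= T -> f 0 <= f s * exp (lam * s).
Proof.
  intros HT Hrc Hd Hsign s Hs.
  enough (- f s * exp (lam * s) <= - f 0) by lra.
  apply (weighted_nonincreasing (fun t => - f t) (fun c => - f' c) lam T);
    [exact HT | apply right_cont_opp, Hrc | | | exact Hs].
  - intros c Hc. apply derivable_pt_lim_opp, Hd; exact Hc.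
  - intros c Hc. pose proof (Hsign c Hc). lra.
Qed.

Lemma weighted_decay (f f' : R -> R) (lam : R) : right_cont_at f 0 ->
  (forall c, 0 < c -> derivable_pt_lim f c (f' c)) ->
  (forall c, 0 < c -> f' c + lam * f c <= 0) ->
  forall t, 0 <= t -> f t <= f 0 * exp (- lam * t).
Proof.
  intros Hrc Hd Hsign t Ht.
  assert (Hw : f t * exp (lam * t) <= f 0).
  { apply (weighted_nonincreasing f f' lam (t + 1)); try lra; try assumption.
    - intros c Hc. apply Hd; lra.
    - intros c Hc. apply Hsign; lra. }
  pose proof (exp_weight_cancel (lam * t)) as Hcancel.
  replace (- lam * t) with (- (lam * t)) by ring.
  pose proof (exp_pos (- (lam * t))).
  replace (f t) with (f t * exp (lam * t) * exp (- (lam * t))) by (rewrite Rmult_assoc, Hcancel; ring).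
  apply Rmult_le_compat_r; lra.
Qed.

Lemma forced_decay (u u' : R -> R) (lam mu K : R) :
  0 <= mu < lam -> 0 <= K -> 0 <= u 0 -> right_cont_at u 0 ->
  (forall c, 0 < c -> derivable_pt_lim u c (u' c)) ->
  (forall c, 0 < c -> u' c + lam * u c <= K * exp (- mu * c)) ->
  forall t, 0 <= t -> u t <= (u 0 + K / (lam - mu)) * exp (- mu * t).
Proof.
  intros Hmu HK Hu0 Hrc Hd Hforce t Ht.
  set (A := K / (lam - mu)).
  assert (HA : 0 <= A) by (unfold A; apply Rmult_le_pos; [lra | apply Rlt_le, Rinv_0_lt_compat; lra]).
  assert (HAK : A * (lam - mu) = K) by (unfold A; field; lra).
  (* v = u - A exp(-mu t) satisfies the homogeneous inequality v' + lam v <= 0 *)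
  assert (Hv := weighted_decay (fun s => u s - A * exp (- mu * s))
                  (fun c => u' c - A * (- mu * exp (- mu * c))) lam).
  assert (Hvt : u t - A * exp (- mu * t) <= (u 0 - A * exp (- mu * 0)) * exp (- lam * t)).
  { apply Hv; [| | |exact Ht].
    - apply right_cont_minus; [exact Hrc|].
      apply right_cont_mul; [apply right_cont_const | apply right_cont_exp_lin].
    - intros c Hc. apply derivable_pt_lim_minus; [apply Hd; exact Hc|].
      apply deriv_eq with (0 * exp (- mu * c) + A * (- mu * exp (- mu * c))); [|ring].
      apply (derivable_pt_lim_mult (fun _ => A) (fun s => exp (- mu * s))); [apply derivable_pt_lim_const | apply deriv_exp_lin].
    - intros c Hc. pose proof (Hforce c Hc) as Hfc.
      rewrite <- HAK in Hfc. nra. }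
  rewrite Rmult_0_r, exp_0, Rmult_1_r in Hvt.
  assert (Hexp : exp (- lam * t) <= exp (- mu * t)) by (apply exp_le_mono; nra).
  pose proof (exp_pos (- lam * t)). pose proof (exp_pos (- mu * t)).
  destruct (Rle_or_lt A (u 0)); nra.
Qed.

(* Solutions of a linear equation y' = a(t) y with bounded coefficient vanish
   everywhere or nowhere: exp(-2Lt) y^2 decreases and exp(2Lt) y^2 increases. *)
Lemma linear_ode_vanishing (y a : R -> R) (L T : R) :
  0 < T -> right_cont_at y 0 ->
  (forall c, 0 < c <= T -> derivable_pt_lim y c (a c * y c)) ->
  (forall c, 0 < c < T -> - L <= a c <= L) ->
  forall s, 0 <= s <= T -> (y s = 0 <-> y 0 = 0).
Proof.
  intros HT Hrc Hd Hbound s Hs.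
  assert (Hsq_rc : right_cont_at (fun t => y t * y t) 0) by (apply right_cont_mul; exact Hrc).
  assert (Hsq_d : forall c, 0 < c <= T ->
            derivable_pt_lim (fun t => y t * y t) c (2 * a c * (y c * y c))).
  { intros c Hc. apply deriv_eq with (a c * y c * y c + y c * (a c * y c)); [|ring].
    apply (derivable_pt_lim_mult y y); apply Hd; exact Hc. }
  assert (Hdown := weighted_nonincreasing (fun t => y t * y t)
                     (fun c => 2 * a c * (y c * y c)) (- (2 * L)) T HT Hsq_rc Hsq_d).
  assert (Hup := weighted_nondecreasing (fun t => y t * y t)
                   (fun c => 2 * a c * (y c * y c)) (2 * L) T HT Hsq_rc Hsq_d).
  pose proof (exp_pos (- (2 * L) * s)) as Hw_down.
  pose proof (exp_pos (2 * L * s)) as Hw_up.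
  split; intros Hzero.
  - enough (y 0 * y 0 <= 0) by nra.
    assert (Hgrowth := Hup ltac:(intros c Hc; pose proof (Hbound c Hc); nra) s Hs).
    cbv beta in Hgrowth. rewrite Hzero in Hgrowth. lra.
  - assert (Hdecay := Hdown ltac:(intros c Hc; pose proof (Hbound c Hc); nra) s Hs).
    cbv beta in Hdecay. rewrite Hzero, Rmult_0_l in Hdecay.
    assert (Hsq : y s * y s <= 0).
    { apply Rmult_le_reg_r with (exp (- (2 * L) * s)); lra. }
    nra.
Qed.

Lemma continuity_induction (P : R -> Prop) :
  (forall T, 0 <= T -> (forall s, 0 <= s < T -> P s) ->
     exists del, 0 < del /\ forall s, T <= s < T + del -> P s) ->
  forall t, 0 <= t -> P t.
Proof.
  intros Hstep t Ht.
  set (E := fun T => 0 < T /\ forall s, 0 <= s < T -> P s).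
  destruct (classic (exists T, E T /\ t < T)) as [[T [[_ HT] HtT]] | Hnot].
  { apply HT; lra. }
  exfalso.
  assert (Hbound : bound E).
  { exists t. intros T HT. destruct (Rle_or_lt T t); [assumption|].
    exfalso; apply Hnot; exists T; auto. }
  assert (Hne : exists T, E T).
  { destruct (Hstep 0) as [del [Hdel Hnear]]; [lra | intros; lra |].
    exists del; split; [exact Hdel|]. intros s Hs. apply Hnear; lra. }
  destruct (completeness E Hbound Hne) as [Tm [Hub Hlub]].
  assert (HTm : 0 < Tm) by (destruct Hne as [T0 HT0]; pose proof (Hub T0 HT0); destruct HT0; lra).
  assert (Hbefore : forall s, 0 <= s < Tm -> P s).
  { intros s Hs. destruct (classic (exists T, E T /\ s < T)) as [[T [[_ HT] HsT]] | Hnot'].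
    - apply HT; lra.
    - exfalso. assert (Tm <= s); [|lra].
      apply Hlub. intros T HT. destruct (Rle_or_lt T s); [assumption|].
      exfalso; apply Hnot'; exists T; auto. }
  destruct (Hstep Tm ltac:(lra) Hbefore) as [del [Hdel Hafter]].
  assert (Hext : E (Tm + del)).
  { split; [lra|]. intros s Hs. destruct (Rlt_or_le s Tm); [apply Hbefore | apply Hafter]; lra. }
  pose proof (Hub _ Hext). lra.
Qed.

Lemma norm2_le_sum (x y : R) : 0 <= x -> 0 <= y -> norm2 x y <= x + y.
Proof.
  intros Hx Hy. unfold norm2.
  rewrite <- (sqrt_pow2 (x + y)) by lra.
  apply sqrt_le_1_alt. nra.
Qed.

Section Saturation.

Variables (M C : R) (sigma : R -> R).
Hypothesis Hsig_nonneg : forall x, 0 <= x -> 0 <= sigma x.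
Hypothesis Hsig_smooth : smooth_on sigma (fun x => 0 < x).
Hypothesis Hsig_der : forall x l, 0 < x -> derivable_pt_lim sigma x l -> 0 <= l <= C.
Hypothesis Hsig_id : forall x, 0 <= x <= M -> sigma x = x.
Hypothesis Hsig_top : forall x, M + 1 < x -> sigma x = M + 1.

Lemma sigma_mono (x y : R) : 0 < x <= y -> sigma x <= sigma y.
Proof.
  destruct Hsig_smooth as [D [HD0 HD]].
  assert (Hder : forall z, 0 < z -> derivable_pt_lim sigma z (D 1%nat z)).
  { intros z Hz. apply (deriv_ext (D 0%nat)); [exact HD0 | apply HD; exact Hz]. }
  intros [Hx [Hxy | <-]]; [|lra].
  destruct (MVT_cor2 sigma (D 1%nat) x y Hxy) as [c [Heq Hc]].
  - intros c Hc. apply Hder. lra.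
  - assert (0 <= D 1%nat c) by (apply (Hsig_der c); [lra | apply Hder; lra]). nra.
Qed.

Lemma sigma_range (x : R) : 0 < x -> 0 <= sigma x <= M + 1.
Proof.
  intros Hx. split; [apply Hsig_nonneg; lra|].
  destruct (Rle_or_lt x (M + 2)).
  - rewrite <- (Hsig_top (M + 2)) by lra. apply sigma_mono; lra.
  - rewrite Hsig_top by lra. lra.
Qed.

Lemma sigma_above (q x : R) : 0 < q <= M -> q <= x -> q <= sigma x.
Proof.
  intros Hq Hqx. rewrite <- (Hsig_id q) at 1 by lra. apply sigma_mono; lra.
Qed.

End Saturation.

Section System.

Variables (alpha k d m b smax : R) (sigma S Q : R -> R).

Local Notation q := (d / m).
Local Notation gamma := (k * d / m - alpha).
Local Notation eta := (Rmin gamma (m / 2)).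

Hypotheses (Hk : 0 < k) (Hd : 0 < d) (Hm : 0 < m) (Hb : 1 < b).
Hypothesis Hsig_range : forall x, 0 < x -> 0 <= sigma x <= smax.
Hypothesis Hsig_above : forall x, q <= x -> q <= sigma x.
Hypotheses (HS_cont0 : right_cont_at S 0) (HQ_cont0 : right_cont_at Q 0).
Hypothesis HS_ode : forall t, 0 < t ->
  derivable_pt_lim S t ((alpha - k * sigma (Q t)) * S t).
Hypothesis HQ_ode : forall t, 0 < t ->
  derivable_pt_lim Q t (d - m * Q t + k * (b - 1) * sigma (Q t) * S t).
Hypotheses (HS0 : 0 <= S 0) (HQ0 : q <= Q 0).

Lemma q_pos : 0 < q.
Proof. apply Rdiv_lt_0_compat; assumption. Qed.

Lemma Q_shift_ode (t : R) : 0 < t ->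
  derivable_pt_lim (fun s => Q s - q) t
    (- m * (Q t - q) + k * (b - 1) * sigma (Q t) * S t).
Proof.
  intros Ht. apply deriv_sub_const.
  apply deriv_eq with (d - m * Q t + k * (b - 1) * sigma (Q t) * S t);
    [apply HQ_ode; exact Ht | field; lra].
Qed.

Lemma solution_right_cont (T : R) : 0 <= T -> right_cont_at S T /\ right_cont_at Q T.
Proof.
  intros [HT | <-]; [|split; assumption].
  split; apply right_cont_of_cont, derivable_continuous_pt; eexists;
    [apply HS_ode | apply HQ_ode]; exact HT.
Qed.

Section Bootstrap.

(* On [0, T), Q stays above q/2 (so sigma(Q) is bounded) and S keeps the
   sign of S(0); we show that then S >= 0 and Q >= q on [0, T]. *)
Variable T : R.
Hypothesis HT : 0 < T.
Hypothesis Hbefore : forall s, 0 <= s < T -> q / 2 < Q s /\ (0 < S 0 -> 0 < S s).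

Lemma sigma_bounded_before (c : R) : 0 < c < T -> 0 <= sigma (Q c) <= smax.
Proof.
  intros Hc. apply Hsig_range. pose proof q_pos.
  destruct (Hbefore c) as [HQc _]; lra.
Qed.

(* S solves a linear equation with bounded coefficient, so it vanishes
   identically or never; in the latter case it stays positive by continuity. *)
Lemma S_sign_on (s : R) : 0 <= s <= T -> 0 <= S s /\ (0 < S 0 -> 0 < S s).
Proof.
  intros Hs.
  assert (Hvanish := linear_ode_vanishing S (fun c => alpha - k * sigma (Q c))
                       (Rabs alpha + k * smax) T HT HS_cont0).
  assert (Hzero : S s = 0 <-> S 0 = 0).
  { apply Hvanish; [| |exact Hs].
    - intros c Hc. apply HS_ode. lra.
    - intros c Hc. pose proof (sigma_bounded_before c Hc).
      pose proof (Rle_abs alpha). pose proof (Rle_abs (- alpha)).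
      rewrite Rabs_Ropp in *. nra. }
  destruct HS0 as [Hpos | Hnull].
  - assert (HsT : 0 < S s).
    { destruct (Rlt_or_le s T) as [HsT | HsT].
      - apply (proj2 (Hbefore s ltac:(lra))); exact Hpos.
      - replace s with T by lra.
        assert (Hnonneg : 0 <= S T).
        { apply nonneg_at_left_limit; [exact HT | |].
          - apply derivable_continuous_pt. eexists; apply HS_ode; exact HT.
          - intros r Hr. apply (proj2 (Hbefore r Hr)); exact Hpos. }
        replace s with T in Hzero by lra.
        destruct Hnonneg as [|HST]; [assumption|].
        symmetry in HST. apply Hzero in HST. lra. }
    split; [lra | intros; exact HsT].
  - assert (S s = 0) by (apply Hzero; symmetry; exact Hnull).
    split; [lra | intros; lra].
Qed.

(* The source term of the Q-equation is nonnegative, so (Q - q) exp(m t)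
   is nondecreasing and Q cannot go below q. *)
Lemma Q_above_on (s : R) : 0 <= s <= T -> q <= Q s.
Proof.
  intros Hs.
  assert (Hmono := weighted_nondecreasing (fun t => Q t - q)
     (fun c => - m * (Q c - q) + k * (b - 1) * sigma (Q c) * S c) m T HT).
  assert (Hw : Q 0 - q <= (Q s - q) * exp (m * s)).
  { apply Hmono; [| | |exact Hs].
    - apply right_cont_minus; [exact HQ_cont0 | apply right_cont_const].
    - intros c Hc. apply Q_shift_ode. lra.
    - intros c Hc. pose proof (sigma_bounded_before c Hc).
      destruct (S_sign_on c ltac:(lra)) as [HSc _].
      assert (0 <= k * (b - 1) * sigma (Q c) * S c).
      { repeat apply Rmult_le_pos; lra. }
      lra. }
  pose proof (exp_pos (m * s)).
  enough (0 <= Q s - q) by lra.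
  apply Rmult_le_reg_r with (exp (m * s)); lra.
Qed.

End Bootstrap.

Theorem invariance (t : R) : 0 <= t -> 0 <= S t /\ q <= Q t.
Proof.
  pose proof q_pos as Hq.
  set (P := fun s => q / 2 < Q s /\ (0 < S 0 -> 0 < S s)).
  assert (HP : forall s, 0 <= s -> P s).
  { apply continuity_induction. intros T HT Hbefore.
    assert (Hstate : q <= Q T /\ (0 < S 0 -> 0 < S T)).
    { destruct HT as [HT | <-]; [|split; [exact HQ0 | intros; assumption]].
      split; [apply (Q_above_on T) | apply (S_sign_on T)]; (assumption || lra). }
    destruct (solution_right_cont T HT) as [HS_rc HQ_rc].
    destruct (right_cont_gt Q T (q / 2) HQ_rc ltac:(lra)) as [del1 [Hdel1 HQnear]].
    destruct (Rlt_or_le 0 (S 0)) as [Hpos | Hnull].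
    - destruct (right_cont_gt S T 0 HS_rc (proj2 Hstate Hpos)) as [del2 [Hdel2 HSnear]].
      exists (Rmin del1 del2). split; [apply Rmin_glb_lt; assumption|].
      pose proof (Rmin_l del1 del2). pose proof (Rmin_r del1 del2).
      intros s Hs. split; [apply HQnear | intros; apply HSnear]; lra.
    - exists del1. split; [exact Hdel1|].
      intros s Hs. split; [apply HQnear; exact Hs | intros; lra]. }
  intros Ht.
  split; [apply (S_sign_on (t + 1)) | apply (Q_above_on (t + 1))];
    (lra || (intros s Hs; apply HP; lra)).
Qed.

Hypothesis Hgamma : 0 < gamma.

(* Since sigma(Q) >= q, S' <= -gamma S: S decays at rate gamma. *)
Lemma S_decay (t : R) : 0 <= t -> S t <= S 0 * exp (- gamma * t).
Proof.
  apply (weighted_decay S (fun c => (alpha - k * sigma (Q c)) * S c) gamma HS_cont0 HS_ode).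
  intros c Hc. destruct (invariance c ltac:(lra)) as [HSc HQc].
  pose proof (Hsig_above (Q c) HQc).
  replace ((alpha - k * sigma (Q c)) * S c + gamma * S c)
    with (- (k * (sigma (Q c) - q) * S c)) by (field; lra).
  assert (0 <= k * (sigma (Q c) - q) * S c) by (repeat apply Rmult_le_pos; lra).
  lra.
Qed.

(* Q - q relaxes at rate m under a source decaying at rate gamma >= eta, so
   it decays at rate eta < m. *)
Lemma Q_decay (t : R) : 0 <= t ->
  Q t - q <= (Q 0 - q + k * (b - 1) * smax * S 0 / (m - eta)) * exp (- eta * t).
Proof.
  pose proof (Rmin_l gamma (m / 2)) as Heta_gamma.
  pose proof (Rmin_r gamma (m / 2)) as Heta_m.
  assert (Heta : 0 < eta) by (apply Rmin_glb_lt; lra).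
  assert (Hsmax : 0 <= smax) by (pose proof (Hsig_range 1); lra).
  apply (forced_decay (fun s => Q s - q)
           (fun c => - m * (Q c - q) + k * (b - 1) * sigma (Q c) * S c) m eta).
  - lra.
  - repeat apply Rmult_le_pos; lra.
  - lra.
  - apply right_cont_minus; [exact HQ_cont0 | apply right_cont_const].
  - exact Q_shift_ode.
  - intros c Hc. destruct (invariance c ltac:(lra)) as [HSc HQc].
    assert (Hsig : 0 <= sigma (Q c) <= smax) by (apply Hsig_range; pose proof q_pos; lra).
    pose proof (S_decay c ltac:(lra)) as HSdec.
    assert (Hrate : exp (- gamma * c) <= exp (- eta * c)) by (apply exp_le_mono; nra).
    assert (Hkb : 0 <= k * (b - 1)) by nra.
    assert (Hsource : sigma (Q c) * S c <= smax * (S 0 * exp (- eta * c))).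
    { apply Rmult_le_compat; try lra.
      pose proof (exp_pos (- gamma * c)). nra. }
    replace (- m * (Q c - q) + k * (b - 1) * sigma (Q c) * S c + m * (Q c - q))
      with (k * (b - 1) * (sigma (Q c) * S c)) by ring.
    replace (k * (b - 1) * smax * S 0 * exp (- eta * c))
      with (k * (b - 1) * (smax * (S 0 * exp (- eta * c)))) by ring.
    apply Rmult_le_compat_l; assumption.
Qed.

Theorem exponential_convergence :
  exists c, 0 < c /\
    forall t, 0 <= t ->
      norm2 (S t - 0) (Q t - q) <= c * exp (- eta * t).
Proof.
  pose proof (Rmin_l gamma (m / 2)) as Heta_gamma.
  pose proof (Rmin_r gamma (m / 2)) as Heta_m.
  set (A := Q 0 - q + k * (b - 1) * smax * S 0 / (m - eta)).
  assert (HA : 0 <= A).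
  { assert (Hsmax : 0 <= smax) by (pose proof (Hsig_range 1); lra).
    unfold A. apply Rplus_le_le_0_compat; [lra|].
    apply Rmult_le_pos; [repeat apply Rmult_le_pos; lra |].
    apply Rlt_le, Rinv_0_lt_compat; lra. }
  exists (S 0 + A + 1). split; [lra|].
  intros t Ht. destruct (invariance t Ht) as [HSt HQt].
  pose proof (S_decay t Ht) as HSdec. pose proof (Q_decay t Ht) as HQdec.
  assert (Hrate : exp (- gamma * t) <= exp (- eta * t)) by (apply exp_le_mono; nra).
  pose proof (exp_pos (- eta * t)).
  assert (HS_eta : S t <= S 0 * exp (- eta * t)).
  { apply Rle_trans with (S 0 * exp (- gamma * t)); [exact HSdec|].
    apply Rmult_le_compat_l; lra. }
  apply Rle_trans with ((S t - 0) + (Q t - q)); [apply norm2_le_sum; lra|].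
  fold A in HQdec. nra.
Qed.

End System.

Theorem mainTheorem5
  (alpha k d m M b C : R) (sigma : R -> R) (St Qt : R -> R)
  (Halpha : 0 < alpha) (Hk : 0 < k) (Hd : 0 < d) (Hm : 0 < m) (HM : 0 < M)
  (HC : 1 < C)
  (Hsig_pos : forall x, 0 <= x -> 0 <= sigma x)
  (Hsig_smooth : smooth_on sigma (fun x => 0 < x))
  (Hsig_id : forall x, 0 <= x <= M -> sigma x = x)
  (Hsig_top : forall x, M + 1 < x -> sigma x = M + 1)
  (Hsig_der : forall x l, 0 < x -> derivable_pt_lim sigma x l -> 0 <= l <= C)
  (Hb : 1 < b)
  (Hgamma : 0 < k * d / m - alpha)
  (HMdm : d / m < M)
  (HS_cont0 : right_cont_at St 0) (HQ_cont0 : right_cont_at Qt 0)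
  (HS_ode : forall t, 0 < t ->
     derivable_pt_lim St t ((alpha - k * sigma (Qt t)) * St t))
  (HQ_ode : forall t, 0 < t ->
     derivable_pt_lim Qt t (d - m * Qt t + k * (b - 1) * sigma (Qt t) * St t))
  (HS0 : 0 <= St 0 <= (m * M - d) / (k * (b - 1) * M))
  (HQ0 : d / m <= Qt 0 <= M) :
  exists c, 0 < c /\
    forall t, 0 <= t ->
      norm2 (St t - 0) (Qt t - d / m)
        <= c * exp (- (Rmin (k * d / m - alpha) (m / 2)) * t).
Proof.
  (* sigma maps (0, oo) into [0, M + 1] and, as q = d/m lies in (0, M],
     stays above q wherever its argument does *)
  assert (Hq : 0 < d / m) by (apply Rdiv_lt_0_compat; assumption).
  apply (exponential_convergence alpha k d m b (M + 1) sigma St Qt);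
    try assumption; try lra.
  - intros x Hx. apply (sigma_range M C); assumption.
  - intros x Hx. apply (sigma_above M C sigma); (assumption || lra).
Qed.
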